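(* Let $S$ be the graph obtained from nine pairwise vertex-disjoint copies of $J_3$ by identifying the copies of vertex $a$ into a single vertex $a$ and the copies of vertex $b$ into a single vertex $b$ (so the copies of the edge $ab$ become a single edge $ab$), all other vertices staying distinct. Let $H$ be a subgraph of $S$ with maximum degree at most three that contains no edge incident with $a$. Then $S-E(H)$ contains $K_4$ or a member of $\mathcal{J}$ as a subgraph.
   Context: $J_3$ is the graph with vertex set $\{a,b,c,d,e,f,g,h,i,j,k\}$ and edges $ab$; $ac,ad,ae,af,ag$; $bc,bd,be,bf,bg$; $cd,de,ef,fg$; $ha,hd,he$; $ia,ie,if$; $jb,jd,je$; $kb,ke,kf$. $J_1$ is the graph on $\{a,b,c,d,e\}$ with edges $\{ab,ac,bc,ae,be,cd,de,ad\}$, and $J_2$ is the graph on the same vertices with edges $\{ab,ac,bc,ae,be,cd,de,bd\}$. $\mathcal{J}$ is the class of graphs obtained by taking six pairwise vertex-disjoint graphs, each isomorphic to $J_1$ or $J_2$, and identifying all copies of $a$ into one vertex and all copies of $b$ into one vertex (other vertices distinct). *)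

From mathcomp Require Import all_boot.
Set Implicit Arguments. Unset Strict Implicit. Unset Printing Implicit Defensive.

(* Small graphs with two distinguished vertices a, b are given on the vertex
   type [bool + 'I_n]:  inl true = a,  inl false = b,  inr v = other vertices. *)
Definition va {n : nat} : bool + 'I_n := inl true.
Definition vb {n : nat} : bool + 'I_n := inl false.
Definition vo {n : nat} (k : nat) : bool + 'I_n.+1 := inr (inord k).

Definition edges_of {T : eqType} (L : seq (T * T)) : rel T :=
  fun x y => ((x, y) \in L) || ((y, x) \in L).

(* J_3 on {a,b,c,d,e,f,g,h,i,j,k}; c..k are vo 0 .. vo 8 *)
Definition J3_edge : rel (bool + 'I_9) :=
  let a := va in let b := vb in
  let c := vo 0 in let d := vo 1 in let e := vo 2 in let f := vo 3 in
  let g := vo 4 in let h := vo 5 in let i := vo 6 in let j := vo 7 in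
  let k := vo 8 in
  edges_of [:: (a, b);
               (a, c); (a, d); (a, e); (a, f); (a, g);
               (b, c); (b, d); (b, e); (b, f); (b, g);
               (c, d); (d, e); (e, f); (f, g);
               (h, a); (h, d); (h, e);
               (i, a); (i, e); (i, f);
               (j, b); (j, d); (j, e);
               (k, b); (k, e); (k, f)].

(* J_1 and J_2 on {a,b,c,d,e}; c,d,e are vo 0, vo 1, vo 2 *)
Definition J1_edge : rel (bool + 'I_3) :=
  let a := va in let b := vb in let c := vo 0 in let d := vo 1 in
  let e := vo 2 in
  edges_of [:: (a, b); (a, c); (b, c); (a, e); (b, e); (c, d); (d, e); (a, d)].

Definition J2_edge : rel (bool + 'I_3) :=
  let a := va in let b := vb in let c := vo 0 in let d := vo 1 in
  let e := vo 2 in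
  edges_of [:: (a, b); (a, c); (b, c); (a, e); (b, e); (c, d); (d, e); (b, d)].

Definition glue_map {m n : nat} (i : 'I_m) (u : bool + 'I_n) : bool + 'I_m * 'I_n :=
  match u with inl x => inl x | inr v => inr (i, v) end.

Definition glue_edge {m n : nat} (E : 'I_m -> rel (bool + 'I_n)) :
  rel (bool + 'I_m * 'I_n) :=
  fun x y => [exists i, exists u, exists v,
                [&& E i u v, glue_map i u == x & glue_map i v == y]].

Definition SV := (bool + 'I_9 * 'I_9)%type.
Definition S_edge : rel SV := glue_edge (fun _ : 'I_9 => J3_edge).
Definition S_a : SV := inl true.

Definition J_edge (sel : 'I_6 -> bool) : rel (bool + 'I_6 * 'I_3) :=
  glue_edge (fun t => if sel t then J1_edge else J2_edge).

Definition contains_subgraph {U V : finType} (F : rel U) (G : rel V) : Prop :=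
  exists f : U -> V, injective f /\ forall x y, F x y -> G (f x) (f y).

Definition K4_edge : rel 'I_4 := fun x y => x != y.

Definition contains_K4_or_J {V : finType} (G : rel V) : Prop :=
  contains_subgraph K4_edge G \/
  exists sel : 'I_6 -> bool, contains_subgraph (J_edge sel) G.

From mathcomp Require Import all_boot zmodp zify.
From Stdlib Require Import Classical.

Set Implicit Arguments. Unset Strict Implicit. Unset Printing Implicit Defensive.

(* Vertex b has at most three H-edges, so at least six of the nine copies of
   J_3 meet H only in edges avoiding both a and b.  In such a copy, if one of
   the path edges cd, de, ef, fg survives, its ends span a K_4 with a and b.
   Otherwise the whole path c d e f g lies in H, and the degree bound at d, e
   and f leaves a vertex among h, j (over de) or i, k (over ef) joined to both
   ends of its path edge in S - E(H); together with a and b this is a copy of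
   J_1 or J_2 fixing a and b.  So either some copy contains K_4, or the six
   copies contain such J_1/J_2's, which glue along a and b to a member of J. *)

Definition edge_minus (T : Type) (E h : rel T) : rel T := fun x y => E x y && ~~ h x y.

Lemma edges_of_sym (T : eqType) (L : seq (T * T)) : symmetric (edges_of L).
Proof. by move=> x y; rewrite /edges_of orbC. Qed.

Lemma edges_of_hom (T U : eqType) (L : seq (T * T)) (G : rel U) (f : T -> U) :
  symmetric G -> all (fun e => G (f e.1) (f e.2)) L ->
  forall x y, edges_of L x y -> G (f x) (f y).
Proof. by move=> G_sym /allP G_L x y /orP[] /G_L //=; rewrite G_sym. Qed.

Lemma contains_subgraph_trans (T U V : finType) (F : rel T) (G : rel U) (H : rel V) :
  contains_subgraph F G -> contains_subgraph G H -> contains_subgraph F H.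
Proof.
move=> [f [f_inj fFG]] [g [g_inj gGH]].
by exists (g \o f); split=> [|x y /fFG /gGH //]; apply: inj_comp.
Qed.

Lemma contains_subgraph_sub (U V : finType) (F : rel U) (G G' : rel V) :
  subrel G G' -> contains_subgraph F G -> contains_subgraph F G'.
Proof. by move=> GG' [f [f_inj fFG]]; exists f; split=> // x y /fFG /GG'. Qed.

Lemma K4_of_edges (V : finType) (G : rel V) (x1 x2 x3 x4 : V) :
  symmetric G -> uniq [:: x1; x2; x3; x4] ->
  G x1 x2 -> G x1 x3 -> G x1 x4 -> G x2 x3 -> G x2 x4 -> G x3 x4 ->
  contains_subgraph K4_edge G.
Proof.
move=> G_sym uniq_x e12 e13 e14 e23 e24 e34.
exists (tnth [tuple x1; x2; x3; x4]); split; first exact/tuple_uniqP.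
move=> [[|[|[|[|//]]]] ?] [[|[|[|[|//]]]] ?] //= _; rewrite (tnth_nth x1) /=;
  by rewrite // G_sym.
Qed.

Lemma no_four_neighbours (T : finType) (h : rel T) x y1 y2 y3 y4 :
  #|[set y | h x y]| <= 3 -> uniq [:: y1; y2; y3; y4] ->
  h x y1 -> h x y2 -> ~~ (h x y3 && h x y4).
Proof.
move=> deg_x uniq_y h1 h2; apply/negP=> /andP[h3 h4].
have: #|[:: y1; y2; y3; y4]| <= #|[set y | h x y]|.
  by apply/subset_leq_card/subsetP=> y; rewrite !inE => /or4P[]/eqP->.
by rewrite (card_uniqP uniq_y) => /leq_trans/(_ deg_x).
Qed.

Lemma injective_into (T : finType) (A : {set T}) k :
  k <= #|A| -> exists g : 'I_k -> T, injective g /\ forall t, g t \in A.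
Proof.
move=> le_kA; exists (fun t => enum_val (widen_ord le_kA t)); split.
  by move=> s t /enum_val_inj [] /val_inj.
by move=> t; apply: enum_valP.
Qed.

Definition lift_root (A B : Type) (psi : A -> B) (u : bool + A) : bool + B :=
  match u with inl x => inl x | inr v => inr (psi v) end.

Definition rooted_embedding (A B : Type) (F : rel (bool + A)) (G : rel (bool + B))
    (psi : A -> B) :=
  injective psi /\ forall x y, F x y -> G (lift_root psi x) (lift_root psi y).

Definition J_of (s : bool) := if s then J1_edge else J2_edge.

Lemma rooted_J_of_edges n (G : rel (bool + 'I_n)) (s : bool) (x y z : 'I_n) :
  symmetric G -> uniq [:: x; y; z] ->
  G va vb -> G va (inr x) -> G vb (inr x) -> G va (inr z) -> G vb (inr z) ->
  G (inr x) (inr y) -> G (inr y) (inr z) -> G (if s then va else vb) (inr y) ->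
  rooted_embedding (J_of s) G (tnth [tuple x; y; z]).
Proof.
move=> G_sym uniq_xyz eab eax ebx eaz ebz exy eyz ery.
split; first exact/tuple_uniqP.
have psiE k : k < 3 -> tnth [tuple x; y; z] (inord k) = nth x [:: x; y; z] k.
  by move=> lt_k3; rewrite (tnth_nth x) /= inordK.
case: s ery => ery; apply: edges_of_hom => //=;
  by rewrite !psiE //= eab eax ebx eaz ebz exy eyz ery.
Qed.

Section Gluing.
Variables m n : nat.
Implicit Types (E : 'I_m -> rel (bool + 'I_n)) (h : rel (bool + 'I_m * 'I_n)).

Lemma glue_map_inj (i : 'I_m) : injective (@glue_map m n i).
Proof. by move=> [x|x] [y|y] //= [] ->. Qed.

Lemma glue_edge_map E i u v : E i u v -> glue_edge E (glue_map i u) (glue_map i v).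
Proof.
move=> Euv; apply/existsP; exists i; apply/existsP; exists u; apply/existsP; exists v.
by rewrite Euv !eqxx.
Qed.

Lemma glue_copy_subgraph E i : contains_subgraph (E i) (glue_edge E).
Proof. by exists (glue_map i); split; [apply: glue_map_inj | apply: glue_edge_map]. Qed.

Lemma glue_rooted_subgraph m' n' (F : 'I_m' -> rel (bool + 'I_n')) E
    (g : 'I_m' -> 'I_m) (psi : 'I_m' -> 'I_n' -> 'I_n) :
  injective g -> (forall t, rooted_embedding (F t) (E (g t)) (psi t)) ->
  contains_subgraph (glue_edge F) (glue_edge E).
Proof.
move=> g_inj psi_emb.
pose Phi := lift_root (fun tv : 'I_m' * 'I_n' => (g tv.1, psi tv.1 tv.2)).
have PhiE t u : Phi (glue_map t u) = glue_map (g t) (lift_root (psi t) u) by case: u.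
exists Phi; split.
  move=> [x|[t v]] [y|[t' v']] //=; first by case=> ->.
  by case=> /g_inj <- /(proj1 (psi_emb t)) ->.
move=> x y /existsP[t /existsP[u /existsP[v /and3P[Fuv /eqP<- /eqP<-]]]].
by rewrite !PhiE; apply/glue_edge_map/(proj2 (psi_emb t)).
Qed.

Definition restrict_copy h (i : 'I_m) : rel (bool + 'I_n) :=
  fun u v => h (glue_map i u) (glue_map i v).

Lemma glue_edge_minus E h :
  subrel (glue_edge (fun i => edge_minus (E i) (restrict_copy h i)))
         (edge_minus (glue_edge E) h).
Proof.
move=> x y /existsP[i /existsP[u /existsP[v /and3P[/andP[Euv not_huv] /eqP<- /eqP<-]]]].
by rewrite /edge_minus glue_edge_map.
Qed.

Lemma card_restrict_copy h i u :
  #|[set v | restrict_copy h i u v]| <= #|[set y | h (glue_map i u) y]|.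
Proof.
rewrite -(card_imset _ (@glue_map_inj i)); apply/subset_leq_card/subsetP => y.
by case/imsetP=> v; rewrite !inE => huv ->.
Qed.

Lemma card_adjacent_copies h x :
  #|[set i | [exists v, h x (inr (i, v))]]| <= #|[set y | h x y]|.
Proof.
pose P := [set p | h x (inr p)].
have -> : [set i | [exists v, h x (inr (i, v))]] = fst @: P.
  apply/setP=> i; rewrite inE; apply/existsP/imsetP => [[v hxv]|[[j v] hxv ->]].
    by exists (i, v); rewrite ?inE.
  by exists v; rewrite inE in hxv.
apply: leq_trans (leq_imset_card _ _) _.
rewrite -(card_imset _ (@inr_inj bool _)); apply/subset_leq_card/subsetP => y.
by case/imsetP=> p; rewrite !inE => hxp ->.
Qed.

End Gluing.

(* [inord] does not compute (its bound check goes through the opaque [idP]),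
   [inZp] does: rewriting with this lemma lets concrete facts about [vo k]
   be decided by evaluation. *)
Lemma inord_inZp n k : k < n.+1 -> inord k = inZp k :> 'I_n.+1.
Proof. by move=> lt_kn; apply: val_inj; rewrite /= inordK ?modn_small. Qed.

Section J3_minus.

Local Notation V := (bool + 'I_9)%type.
Variable r : rel V.
Hypothesis r_sym : symmetric r.
Hypothesis r_a : forall y, ~~ r va y.
Hypothesis r_b : forall v, ~~ r vb (inr v).
Hypothesis r_deg : forall x, #|[set y | r x y]| <= 3.
Local Notation G := (edge_minus J3_edge r).

Lemma J3_minus_sym : symmetric G.
Proof. by move=> x y; rewrite /edge_minus r_sym; congr (_ && _); apply: edges_of_sym. Qed.

Lemma J3_minus_K4 p : ~~ r (vo p) (vo p.+1) -> p < 4 -> contains_subgraph K4_edge G.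
Proof.
move=> r_p lt_p4; apply: (@K4_of_edges _ _ va vb (vo p) (vo p.+1)).
  exact: J3_minus_sym.
all: rewrite /edge_minus ?r_p ?r_a ?r_b ?andbT.
all: by case: p lt_p4 {r_p} => [|[|[|[|//]]]] _; rewrite /J3_edge /vo ?inord_inZp.
Qed.

(* The hub [vo w] is adjacent in J_3 to [vo p], [vo p.+1] and to a (s = true)
   or b (s = false). *)
Lemma J3_minus_J (s : bool) p w :
  (p, w, s) \in [:: (1, 5, true); (1, 7, false); (2, 6, true); (2, 8, false)] ->
  ~~ r (vo p) (vo w) -> ~~ r (vo p.+1) (vo w) ->
  exists psi, rooted_embedding (J_of s) G psi.
Proof.
move=> hub r_pw r_p1w; exists (tnth [tuple inord p; inord w; inord p.+1]).
have r_wp1 : ~~ r (vo w) (vo p.+1) by rewrite r_sym.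
apply: rooted_J_of_edges; first exact: J3_minus_sym.
all: rewrite /edge_minus ?r_pw ?r_wp1 ?andbT.
all: move: hub; rewrite !inE => /or4P[] /eqP[? ? ?]; subst=> /=.
all: by rewrite ?r_a ?r_b ?andbT /J3_edge /vo ?inord_inZp.
Qed.

Lemma J3_minus_K4_or_J :
  contains_subgraph K4_edge G \/ exists s psi, rooted_embedding (J_of s) G psi.
Proof.
have [r_cd|/J3_minus_K4 K4] := boolP (r (vo 0) (vo 1)); last by left; apply: K4.
have [r_de|/J3_minus_K4 K4] := boolP (r (vo 1) (vo 2)); last by left; apply: K4.
have [r_ef|/J3_minus_K4 K4] := boolP (r (vo 2) (vo 3)); last by left; apply: K4.
have [r_fg|/J3_minus_K4 K4] := boolP (r (vo 3) (vo 4)); last by left; apply: K4.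
right.
have at_most_one p y3 y4 : r (vo p) (vo p.-1) -> r (vo p) (vo p.+1) ->
    uniq ([:: vo p.-1; vo p.+1; vo y3; vo y4] : seq V) ->
    ~~ (r (vo p) (vo y3) && r (vo p) (vo y4)).
  by move=> r_prev r_next uniq_y; apply: no_four_neighbours (r_deg _) uniq_y r_prev r_next.
have [r_dc r_ed r_fe] : [/\ r (vo 1) (vo 0), r (vo 2) (vo 1) & r (vo 3) (vo 2)].
  by split; rewrite r_sym.
have d_hj : ~~ (r (vo 1) (vo 5) && r (vo 1) (vo 7)).
  by apply: at_most_one => //; rewrite /vo !inord_inZp.
have e_hi : ~~ (r (vo 2) (vo 5) && r (vo 2) (vo 6)).
  by apply: at_most_one => //; rewrite /vo !inord_inZp.
have e_hj : ~~ (r (vo 2) (vo 5) && r (vo 2) (vo 7)).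
  by apply: at_most_one => //; rewrite /vo !inord_inZp.
have e_hk : ~~ (r (vo 2) (vo 5) && r (vo 2) (vo 8)).
  by apply: at_most_one => //; rewrite /vo !inord_inZp.
have e_ij : ~~ (r (vo 2) (vo 6) && r (vo 2) (vo 7)).
  by apply: at_most_one => //; rewrite /vo !inord_inZp.
have e_ik : ~~ (r (vo 2) (vo 6) && r (vo 2) (vo 8)).
  by apply: at_most_one => //; rewrite /vo !inord_inZp.
have e_jk : ~~ (r (vo 2) (vo 7) && r (vo 2) (vo 8)).
  by apply: at_most_one => //; rewrite /vo !inord_inZp.
have f_ik : ~~ (r (vo 3) (vo 6) && r (vo 3) (vo 8)).
  by apply: at_most_one => //; rewrite /vo !inord_inZp.
(* At most one of h, i, j, k is r-adjacent to e, d blocks at most one of h, j,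
   and f at most one of i, k. *)
have : [|| ~~ r (vo 1) (vo 5) && ~~ r (vo 2) (vo 5),
           ~~ r (vo 1) (vo 7) && ~~ r (vo 2) (vo 7),
           ~~ r (vo 2) (vo 6) && ~~ r (vo 3) (vo 6)
         | ~~ r (vo 2) (vo 8) && ~~ r (vo 3) (vo 8)].
  move: d_hj e_hi e_hj e_hk e_ij e_ik e_jk f_ik.
  move: (r (vo 1) (vo 5)) (r (vo 1) (vo 7)) (r (vo 2) (vo 5)) (r (vo 2) (vo 6)).
  move: (r (vo 2) (vo 7)) (r (vo 2) (vo 8)) (r (vo 3) (vo 6)) (r (vo 3) (vo 8)).
  by do 8!case.
case/or4P=> /andP[r_pw r_p1w].
- by exists true; apply: (@J3_minus_J true 1 5).
- by exists false; apply: (@J3_minus_J false 1 7).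
- by exists true; apply: (@J3_minus_J true 2 6).
- by exists false; apply: (@J3_minus_J false 2 8).
Qed.

End J3_minus.

Theorem corollary4 (h : rel SV) :
  (forall x y, h x y = h y x) ->
  (forall x y, h x y -> S_edge x y) ->
  (forall x : SV, #|[set y | h x y]| <= 3) ->
  (forall y : SV, ~~ h S_a y) ->
  contains_K4_or_J (fun x y => S_edge x y && ~~ h x y).
Proof.
move=> h_sym _ h_deg h_a.
pose B := [set i | [exists v, h (inl false) (inr (i, v))]].
have [g [g_inj g_free]] : exists g : 'I_6 -> 'I_9, injective g /\ forall t, g t \in ~: B.
  have card_B : #|B| <= 3 := leq_trans (card_adjacent_copies h _) (h_deg _).
  by apply: injective_into; have := cardsC B; rewrite card_ord; lia.
pose r t := restrict_copy h (g t).
have r_sym t : symmetric (r t) by move=> u v; apply: h_sym.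
have r_a t y : ~~ r t va y by apply: h_a.
have r_b t v : ~~ r t vb (inr v).
  by move: (g_free t); rewrite !inE negb_exists => /forallP/(_ v).
have r_deg t u : #|[set v | r t u v]| <= 3.
  exact: leq_trans (card_restrict_copy _ _ _) (h_deg _).
have glue_sub := @glue_edge_minus 9 9 (fun=> J3_edge) h.
case: (classic (exists t, contains_subgraph K4_edge (edge_minus J3_edge (r t)))).
  case=> t K4_t; left; apply: contains_subgraph_sub glue_sub _.
  exact: contains_subgraph_trans K4_t (glue_copy_subgraph _ _).
move=> no_K4; right.
have J_t t : exists p : bool * ('I_3 -> 'I_9),
    rooted_embedding (J_of p.1) (edge_minus J3_edge (r t)) p.2.
  case: (J3_minus_K4_or_J (r_sym t) (r_a t) (r_b t) (r_deg t)) => [K4_t|[s [psi J_s]]].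
    by case: no_K4; exists t.
  by exists (s, psi).
have [p p_emb] := fin_all_exists J_t.
exists (fun t => (p t).1); apply: contains_subgraph_sub glue_sub _.
exact: glue_rooted_subgraph g_inj p_emb.
Qed.
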